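(* Let $(\mathcal{L},[\cdot,\cdot,\cdot]_{\mathcal{L}})$ be a (right) $3$-Leibniz algebra over a field $\mathbb{K}$ and $\overline{\mathcal{L}}=\mathbb{K}\oplus\mathcal{L}$. Let $R_1$ be the linear map on $(\mathbb{K}\oplus(\mathcal{L}\otimes\mathcal{L}))^{\otimes2}$ given by $R_1((a,x_1\otimes x_2)\otimes(b,y_1\otimes y_2))=(b,y_1\otimes y_2)\otimes(a,x_1\otimes x_2)+(1,0)\otimes(0,[x_1,y_1,y_2]_{\mathcal{L}}\otimes x_2+x_1\otimes[x_2,y_1,y_2]_{\mathcal{L}})$, and $R_2$ the linear map on $(\overline{\mathcal{L}}\otimes\overline{\mathcal{L}})^{\otimes2}$ given by $R_2((a_1,x_1)\otimes(a_2,x_2)\otimes(b_1,y_1)\otimes(b_2,y_2))=(b_1,y_1)\otimes(b_2,y_2)\otimes(a_1,x_1)\otimes(a_2,x_2)+(1,0)\otimes(1,0)\otimes\big((0,[x_1,y_1,y_2]_{\mathcal{L}})\otimes(a_2,x_2)+(a_1,x_1)\otimes(0,[x_2,y_1,y_2]_{\mathcal{L}})\big)$. Define the injective linear map $\mathfrak{s}:\mathbb{K}\oplus(\mathcal{L}\otimes\mathcal{L})\to\overline{\mathcal{L}}\otimes\overline{\mathcal{L}}$ by $\mathfrak{s}(a,x\otimes y)=a(1,0)\otimes(1,0)+(0,x)\otimes(0,y)$. Then $(\mathfrak{s}\otimes\mathfrak{s})\circ R_1=R_2\circ(\mathfrak{s}\otimes\mathfrak{s})$.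
   Context: A (right) $3$-Leibniz algebra is a vector space $\mathcal{L}$ with a trilinear map $[\cdot,\cdot,\cdot]_{\mathcal{L}}$ such that $[[x_1,x_2,x_3]_{\mathcal{L}},y_1,y_2]_{\mathcal{L}}=[[x_1,y_1,y_2]_{\mathcal{L}},x_2,x_3]_{\mathcal{L}}+[x_1,[x_2,y_1,y_2]_{\mathcal{L}},x_3]_{\mathcal{L}}+[x_1,x_2,[x_3,y_1,y_2]_{\mathcal{L}}]_{\mathcal{L}}$. Both $R_1$ and $R_2$ are solutions of the Yang-Baxter equation; the claim says $\mathfrak{s}$ is a homomorphism between them. *)

From mathcomp Require Import all_boot all_algebra.
Set Implicit Arguments. Unset Strict Implicit. Unset Printing Implicit Defensive.
Import GRing.Theory.
Local Open Scope ring_scope.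

(* We represent elements of a tensor
   product V1 (x) ... (x) Vk by finite formal sums of pure tensors
   (lists of k-tuples); two such representatives denote the same element of the
   tensor product iff every k-linear map (into any K-vector space) takes the same
   value on them (universal property of the tensor product). *)

Section ThreeLeibniz.
Variable (K : fieldType) (L : lmodType K).

Definition trilinear (br : L -> L -> L -> L) :=
  [/\ forall (c : K) u v y z, br (c *: u + v) y z = c *: br u y z + br v y z,
      forall (c : K) x u v z, br x (c *: u + v) z = c *: br x u z + br x v z &
      forall (c : K) x y u v, br x y (c *: u + v) = c *: br x y u + br x y v].

Definition right_3Leibniz (br : L -> L -> L -> L) :=
  forall x1 x2 x3 y1 y2,
    br (br x1 x2 x3) y1 y2 =
    br (br x1 y1 y2) x2 x3 + br x1 (br x2 y1 y2) x3 + br x1 x2 (br x3 y1 y2).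

Definition is_3Leibniz (br : L -> L -> L -> L) := trilinear br /\ right_3Leibniz br.

Definition Lbar : lmodType K := (K^o * L)%type.
Definition one0 : Lbar := (1 : K^o, 0 : L).
Definition inL (x : L) : Lbar := (0 : K^o, x).

(* formal sums representing elements of L (x) L *)
Definition T2 := seq (L * L).
Definition D := (K * T2)%type.
(* formal sums representing elements of (K (+) (L (x) L))^{(x)2} *)
Definition DD := seq (D * D).
(* formal sums representing elements of (Lbar (x) Lbar)^{(x)2} = Lbar^{(x)4} *)
Definition LB4 := seq (Lbar * Lbar * Lbar * Lbar).

Definition multilinear4 (W : lmodType K) (phi : Lbar -> Lbar -> Lbar -> Lbar -> W) :=
  [/\ forall (c : K) u v x2 x3 x4,
        phi (c *: u + v) x2 x3 x4 = c *: phi u x2 x3 x4 + phi v x2 x3 x4,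
      forall (c : K) x1 u v x3 x4,
        phi x1 (c *: u + v) x3 x4 = c *: phi x1 u x3 x4 + phi x1 v x3 x4,
      forall (c : K) x1 x2 u v x4,
        phi x1 x2 (c *: u + v) x4 = c *: phi x1 x2 u x4 + phi x1 x2 v x4 &
      forall (c : K) x1 x2 x3 u v,
        phi x1 x2 x3 (c *: u + v) = c *: phi x1 x2 x3 u + phi x1 x2 x3 v].

Definition eval4 (W : lmodType K) (phi : Lbar -> Lbar -> Lbar -> Lbar -> W)
  (t : LB4) : W := \sum_(w <- t) phi w.1.1.1 w.1.1.2 w.1.2 w.2.

Definition tensor4_eq (t1 t2 : LB4) : Prop :=
  forall (W : lmodType K) (phi : Lbar -> Lbar -> Lbar -> Lbar -> W),
    multilinear4 phi -> eval4 phi t1 = eval4 phi t2.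

Variable br : L -> L -> L -> L.

Definition s_map (d : D) : seq (Lbar * Lbar) :=
  (d.1 *: one0, one0) :: [seq (inL p.1, inL p.2) | p <- d.2].

Definition ss (X : DD) : LB4 :=
  flatten [seq [seq (u.1, u.2, v.1, v.2) | u <- s_map p.1, v <- s_map p.2] | p <- X].

Definition R1_pure (d d' : D) : DD :=
  let extra : T2 :=
    flatten [seq [:: (br x.1 y.1 y.2, x.2); (x.1, br x.2 y.1 y.2)]
            | x <- d.2, y <- d'.2] in
  [:: (d', d); ((1, [::]), (0, extra))].

Definition R1 (X : DD) : DD := flatten [seq R1_pure p.1 p.2 | p <- X].

Definition R2_pure (w : Lbar * Lbar * Lbar * Lbar) : LB4 :=
  let p1 := w.1.1.1 in let p2 := w.1.1.2 in let q1 := w.1.2 in let q2 := w.2 in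
  [:: (q1, q2, p1, p2);
      (one0, one0, inL (br p1.2 q1.2 q2.2), p2);
      (one0, one0, p1, inL (br p2.2 q1.2 q2.2))].

Definition R2 (t : LB4) : LB4 := flatten [seq R2_pure w | w <- t].

End ThreeLeibniz.

(* Both sides are sums over pure tensors, so it suffices to compare them on
   (a, xs) (x) (b, ys).  The flip parts of R1 and R2 correspond under s (x) s
   term by term.  The correction term of R2 applied to s(a, xs) (x) s(b, ys)
   vanishes on every summand involving a scalar component (1,0) (x) (1,0),
   because the bracket is zero as soon as its first or second argument is
   zero; the surviving summands are exactly s (x) s of the correction term
   of R1. *)

From mathcomp Require Import all_boot all_algebra.
Set Implicit Arguments. Unset Strict Implicit. Unset Printing Implicit Defensive.
Import GRing.Theory.
Local Open Scope ring_scope.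

Lemma linear_fun0 (R : pzRingType) (U V : lmodType R) (f : U -> V) :
  linear f -> f 0 = 0.
Proof. by move=> lin_f; rewrite -[0 in LHS]subr0 (zmod_morphism_linear lin_f) subrr. Qed.

Section SHomomorphism.
Variables (K : fieldType) (L : lmodType K) (br : L -> L -> L -> L).
Hypotheses (br0l : forall y z, br 0 y z = 0) (br0m : forall x z, br x 0 z = 0).

Definition R1_extra (xs ys : T2 L) : T2 L :=
  flatten [seq [:: (br x.1 y.1 y.2, x.2); (x.1, br x.2 y.1 y.2)] | x <- xs, y <- ys].

Lemma R1_pureE (d d' : D L) :
  R1_pure br d d' = [:: (d', d); ((1, [::]), (0, R1_extra d.2 d'.2))].
Proof. by []. Qed.

Variables (W : lmodType K) (phi : Lbar L -> Lbar L -> Lbar L -> Lbar L -> W).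
Hypothesis phi_multilinear : multilinear4 phi.

Lemma phi0_3 x1 x2 x4 : phi x1 x2 0 x4 = 0.
Proof.
case: phi_multilinear => _ _ lin3 _.
by apply: (@linear_fun0 _ _ _ (phi x1 x2 ^~ x4)) => c u v; apply: lin3.
Qed.

Lemma phi0_4 x1 x2 x3 : phi x1 x2 x3 0 = 0.
Proof.
case: phi_multilinear => _ _ _ lin4.
by apply: (@linear_fun0 _ _ _ (phi x1 x2 x3)) => c u v; apply: lin4.
Qed.

Definition phi_ss (d d' : D L) : W :=
  \sum_(u <- s_map d) \sum_(v <- s_map d') phi u.1 u.2 v.1 v.2.

(* [phi] applied to the last two summands of [R2_pure br (u.1, u.2, v.1, v.2)] *)
Definition R2_corr (u v : Lbar L * Lbar L) : W :=
  phi (one0 L) (one0 L) (inL (br u.1.2 v.1.2 v.2.2)) u.2 +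
  phi (one0 L) (one0 L) u.1 (inL (br u.2.2 v.1.2 v.2.2)).

Lemma sum_s_map (F : Lbar L * Lbar L -> W) (d : D L) :
  \sum_(u <- s_map d) F u =
  F (d.1 *: one0 L, one0 L) + \sum_(x <- d.2) F (inL x.1, inL x.2).
Proof. by rewrite big_cons big_map. Qed.

Lemma eval4_ss (X : DD L) : eval4 phi (ss X) = \sum_(p <- X) phi_ss p.1 p.2.
Proof.
rewrite /eval4 big_flatten big_map; apply: eq_bigr => p _.
by rewrite big_allpairs_dep.
Qed.

Lemma eval4_R2_ss (X : DD L) :
  eval4 phi (R2 br (ss X)) =
  \sum_(p <- X) \sum_(u <- s_map p.1) \sum_(v <- s_map p.2)
    (phi v.1 v.2 u.1 u.2 + R2_corr u v).
Proof.
rewrite /eval4 big_flatten big_map big_flatten big_map; apply: eq_bigr => p _.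
rewrite big_allpairs_dep; apply: eq_bigr => u _; apply: eq_bigr => v _.
by rewrite !big_cons big_nil /= addr0 addrA.
Qed.

Lemma R2_corr_scalar_l a v : R2_corr (a *: one0 L, one0 L) v = 0.
Proof.
by rewrite /R2_corr /= scaler0 !br0l phi0_3 phi0_4 addr0.
Qed.

Lemma R2_corr_scalar_r u b : R2_corr u (b *: one0 L, one0 L) = 0.
Proof.
by rewrite /R2_corr /= scaler0 !br0m phi0_3 phi0_4 addr0.
Qed.

Lemma sum_R2_corr (d d' : D L) :
  \sum_(u <- s_map d) \sum_(v <- s_map d') R2_corr u v =
  \sum_(x <- d.2) \sum_(y <- d'.2) R2_corr (inL x.1, inL x.2) (inL y.1, inL y.2).
Proof.
rewrite sum_s_map big1 ?add0r => [|v _]; last exact: R2_corr_scalar_l.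
by apply: eq_bigr => x _; rewrite sum_s_map R2_corr_scalar_r add0r.
Qed.

Lemma phi_ss_R1_extra (xs ys : T2 L) :
  phi_ss (1, [::]) (0, R1_extra xs ys) =
  \sum_(x <- xs) \sum_(y <- ys) R2_corr (inL x.1, inL x.2) (inL y.1, inL y.2).
Proof.
rewrite /phi_ss big_seq1 sum_s_map /= scale0r scale1r phi0_3 add0r.
rewrite big_flatten big_allpairs_dep; apply: eq_bigr => x _; apply: eq_bigr => y _.
by rewrite !big_cons big_nil /= addr0.
Qed.

Lemma phi_ss_R1_pure (d d' : D L) :
  \sum_(p <- R1_pure br d d') phi_ss p.1 p.2 =
  \sum_(u <- s_map d) \sum_(v <- s_map d') (phi v.1 v.2 u.1 u.2 + R2_corr u v).
Proof.
rewrite R1_pureE big_cons big_seq1 /= phi_ss_R1_extra -sum_R2_corr.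
under [RHS]eq_bigr => u _ do rewrite big_split.
by rewrite big_split /= [phi_ss d' d]exchange_big.
Qed.

End SHomomorphism.

Theorem proposition5p8 (K : fieldType) (L : lmodType K) (br : L -> L -> L -> L)
  (hbr : is_3Leibniz br) (X : DD L) :
  tensor4_eq (ss (R1 br X)) (R2 br (ss X)).
Proof.
move=> W phi phi_multilinear.
have [[lin1 lin2 _] _] := hbr.
have br0l y z : br 0 y z = 0.
  by apply: (@linear_fun0 _ _ _ (fun x => br x y z)) => c u v; apply: lin1.
have br0m x z : br x 0 z = 0.
  by apply: (@linear_fun0 _ _ _ (fun y => br x y z)) => c u v; apply: lin2.
rewrite eval4_ss eval4_R2_ss /R1 big_flatten big_map.
by apply: eq_bigr => p _; apply: (phi_ss_R1_pure br0l br0m phi_multilinear).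
Qed.
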